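(* Let $(G,w)$, $(G',w')$ be loopless vertex-weighted graphs of genus $g$ and $g'$ respectively, and let $\phi:(G,w)\to(G',w')$ be a pseudo-harmonic indexed morphism. Then, writing $v'=\phi(v)$, $$2g-2=\deg(\phi)(2g'-2)+\sum_{v\in V(G)}2\big(M_\phi(v)-1+w(v)-M_\phi(v)w'(v')\big)-\sum_{v\in V(G)}\sum_{e\in E_v(G)}(r_\phi(e)-1)$$ $$=\deg(\phi)(2g'-2)+\sum_{v\in V(G)}2\big(M_\phi(v)-1+w(v)-M_\phi(v)w'(v')\big)+\sum_{v\in V(G)}\big(val(v)-M_\phi(v)val(v')\big).$$
   Context: A vertex-weighted graph $(G,w)$ is a finite connected loopless multigraph $G$ with $w:V(G)\to\mathbb{Z}_{\ge0}$; its genus is $g(G,w)=|E(G)|-|V(G)|+1+\sum_{v}w(v)$. $E_v(G)$ is the set of edges incident to $v$ and $val(v)=|E_v(G)|$. A morphism $\phi:G\to G'$ is a map $V(G)\cup E(G)\to V(G')\cup E(G')$ with $\phi(V(G))\subseteq V(G')$ such that each edge $e$ with endpoints $v_1,v_2$ is mapped either to an edge with endpoints $\phi(v_1),\phi(v_2)$ or to the vertex $\phi(v_1)=\phi(v_2)$. An indexed morphism assigns to every $e\in E(G)$ an integer $r_\phi(e)\ge0$, with $r_\phi(e)=0$ iff $\phi(e)$ is a vertex. It is pseudo-harmonic if for every $v\in V(G)$ there is $M_\phi(v)$ such that $M_\phi(v)=\sum_{e\in E(G),\,v\in e,\,\phi(e)=e'}r_\phi(e)$ for every $e'\in E(G')$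 incident to $\phi(v)$. Its degree is $\deg(\phi)=\sum_{e\in E(G),\phi(e)=e'}r_\phi(e)$ for any $e'\in E(G')$. *)

From HB Require Import structures.
From mathcomp Require Import all_boot all_order all_algebra.
Set Implicit Arguments. Unset Strict Implicit. Unset Printing Implicit Defensive.
Import Order.TTheory GRing.Theory Num.Theory.

(* A vertex-weighted multigraph: finite vertex and edge types, each edge has an
   (unordered, recorded as a pair) set of two endpoints, and a weight on vertices. *)
Record wgraph := WGraph {
  vert : finType;
  edge : finType;
  ends : edge -> vert * vert;
  weight : vert -> nat }.

Definition incident (G : wgraph) (v : vert G) (e : edge G) : bool :=
  ((ends e).1 == v) || ((ends e).2 == v).

Definition Ev (G : wgraph) (v : vert G) : {set edge G} := [set e | incident v e].

Definition valence (G : wgraph) (v : vert G) : nat := #|Ev v|.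

Definition adj (G : wgraph) : rel (vert G) :=
  fun u v => [exists e, (ends e == (u, v)) || (ends e == (v, u))].

Definition loopless (G : wgraph) : Prop := forall e : edge G, (ends e).1 != (ends e).2.

Definition connected_graph (G : wgraph) : Prop :=
  0 < #|vert G| /\ forall u v : vert G, connect (@adj G) u v.

Definition genus (G : wgraph) : int :=
  (#|edge G|%:Z - #|vert G|%:Z + 1 + \sum_(v : vert G) (weight v)%:Z)%R.

Definition is_morphism (G G' : wgraph) (phiV : vert G -> vert G')
    (phiE : edge G -> vert G' + edge G') : Prop :=
  forall e : edge G,
    match phiE e with
    | inl u => phiV (ends e).1 = u /\ phiV (ends e).2 = u
    | inr e' => ends e' = (phiV (ends e).1, phiV (ends e).2) \/
                ends e' = (phiV (ends e).2, phiV (ends e).1)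
    end.

Definition is_indexing (G G' : wgraph) (phiE : edge G -> vert G' + edge G')
    (r : edge G -> nat) : Prop :=
  forall e : edge G, (r e == 0%N) = (if phiE e is inl _ then true else false).

(* M is a witness of pseudo-harmonicity: M(v) = sum_{e in E_v, phi(e) = e'} r(e)
   for every edge e' incident to phi(v). *)
Definition pseudo_harmonic_with (G G' : wgraph) (phiV : vert G -> vert G')
    (phiE : edge G -> vert G' + edge G') (r : edge G -> nat) (M : vert G -> nat) : Prop :=
  forall (v : vert G) (e' : edge G'), incident (phiV v) e' ->
    M v = (\sum_(e in Ev v | phiE e == inr e') r e)%N.

Definition is_degree (G G' : wgraph) (phiE : edge G -> vert G' + edge G')
    (r : edge G -> nat) (d : nat) : Prop :=
  forall e' : edge G', d = (\sum_(e | phiE e == inr e') r e)%N.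

From HB Require Import structures.
From mathcomp Require Import all_boot all_order all_algebra ring.
Import Order.TTheory GRing.Theory Num.Theory.

(* An edge of G lying over an edge e' of G' has exactly one endpoint over each
   end of e', so pseudo-harmonicity makes the local degrees M(v) add up to
   deg(phi) on the fibre over any vertex lying on an edge, i.e. (G' being
   connected with an edge) over every vertex.  Hence
   sum_v M(v) f(phi v) = deg(phi) sum_v' f(v') for every f on V(G').  With
   f = 1 and f = w' both identities reduce to the correction term being
   2|E(G)| - 2 deg(phi)|E(G')|.  For the first this is the handshake lemma with
   sum_e r(e) = deg(phi)|E(G')|; for the second it is the case f = val. *)

Lemma Posz_sum (I : finType) (P : pred I) (F : I -> nat) :
  Posz (\sum_(i | P i) F i) = (\sum_(i | P i) (F i)%:Z)%R.
Proof. by rewrite (big_morph Posz PoszD (erefl (Posz 0))). Qed.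

Lemma card_incident_loopless (G : wgraph) (e : edge G) :
  loopless G -> #|[pred v | incident v e]| = 2.
Proof.
move=> lG; transitivity #|[set (ends e).1; (ends e).2]|.
  by apply: eq_card => v; rewrite !inE /incident !(eq_sym v).
by rewrite cards2 (lG e).
Qed.

Lemma handshake (G : wgraph) (f : edge G -> nat) : loopless G ->
  \sum_v \sum_(e in Ev v) f e = 2 * \sum_e f e.
Proof.
move=> lG; rewrite (exchange_big_dep xpredT) //= big_distrr /=.
apply: eq_bigr => e _.
rewrite (eq_bigl [pred v | incident v e]); last by move=> v; rewrite /Ev inE.
by rewrite sum_nat_const card_incident_loopless // mulnC.
Qed.

Lemma sum_valence (G : wgraph) : loopless G ->
  \sum_(v : vert G) valence v = 2 * #|edge G|.
Proof.
move=> lG; rewrite -sum1_card -handshake //.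
by apply: eq_bigr => v _; rewrite sum1_card.
Qed.

Lemma connected_incident_edge {G : wgraph} (v : vert G) :
  connected_graph G -> 0 < #|edge G| -> exists e, incident v e.
Proof.
move=> [_ connG] /card_gt0P [e0 _].
case/connectP: (connG v (ends e0).1) => [[|x p]] /= adj_p last_p.
  by exists e0; rewrite /incident last_p eqxx.
case/andP: adj_p => /existsP [e ends_e] _; exists e.
by rewrite /incident; case/orP: ends_e => /eqP -> /=; rewrite eqxx ?orbT.
Qed.

Section PseudoHarmonic.
Set Implicit Arguments. Unset Strict Implicit.

Variables (G G' : wgraph) (phiV : vert G -> vert G').
Variables (phiE : edge G -> vert G' + edge G') (r : edge G -> nat).
Variables (M : vert G -> nat) (d : nat).

Hypothesis phi_morphism : is_morphism phiV phiE.
Hypothesis r_indexing : is_indexing phiE r.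
Hypothesis M_harmonic : pseudo_harmonic_with phiV phiE r M.
Hypothesis d_degree : is_degree phiE r d.

Lemma sum_index_degree : \sum_e r e = d * #|edge G'|.
Proof.
transitivity (\sum_e \sum_e' (if phiE e == inr e' then r e else 0)).
  apply: eq_bigr => e _; have := r_indexing e.
  case: (phiE e) => [u /eqP r0 | e' _]; first by rewrite r0 big1.
  by rewrite -big_mkcond (big_pred1 e').
rewrite exchange_big (eq_bigr (fun=> d)) => [|e' _]; first by rewrite sum_nat_const mulnC.
by rewrite (d_degree e') [RHS]big_mkcond.
Qed.

Hypothesis G'_loopless : loopless G'.

Lemma card_fiber_incident (e : edge G) (e' : edge G') (v' : vert G') :
  phiE e = inr e' -> incident v' e' ->
  #|[pred v | (phiV v == v') && incident v e]| = 1.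
Proof.
move=> phie inc_v'; have := phi_morphism e; rewrite phie.
set a := (ends e).1; set b := (ends e).2 => ends_e'.
have [ne inc] : phiV a != phiV b /\ (phiV a == v') || (phiV b == v').
  move: (G'_loopless e') inc_v'; rewrite /incident.
  by case: ends_e' => -> //=; rewrite eq_sym orbC.
case/orP: inc => /eqP <-; [apply: (@eq_card1 _ a) | apply: (@eq_card1 _ b)] => v.
  rewrite !inE /incident -/a -/b; case: (eqVneq v a) => [->|_]; rewrite ?eqxx //=.
  by case: (eqVneq b v) => [<-|]; rewrite ?andbF // eq_sym (negbTE ne).
rewrite !inE /incident -/a -/b; case: (eqVneq v b) => [->|_]; rewrite ?eqxx ?orbT //=.
by case: (eqVneq a v) => [<-|]; rewrite ?andbF ?orbF // (negbTE ne).
Qed.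

Lemma sum_fiber_harmonic (v' : vert G') (e' : edge G') : incident v' e' ->
  \sum_(v | phiV v == v') M v = \sum_(e | phiE e == inr e') r e.
Proof.
move=> inc_v'.
transitivity (\sum_(v | phiV v == v') \sum_(e in Ev v | phiE e == inr e') r e).
  by apply: eq_bigr => v /eqP phiv; apply: M_harmonic; rewrite phiv.
rewrite (exchange_big_dep (fun e => phiE e == inr e')) /=; last by move=> v e _ /andP[].
apply: eq_bigr => e /eqP phie; rewrite sum_nat_const.
rewrite -[RHS]mul1n -(card_fiber_incident phie inc_v'); congr (_ * _).
by apply: eq_card => v; rewrite unfold_in /= phie eqxx andbT /Ev !inE.
Qed.

Hypothesis G'_connected : connected_graph G'.
Hypothesis G'_has_edge : 0 < #|edge G'|.

Lemma sum_harmonic_comp (f : vert G' -> nat) :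
  \sum_v M v * f (phiV v) = d * \sum_v' f v'.
Proof.
rewrite (partition_big phiV xpredT) //= big_distrr /=; apply: eq_bigr => v' _.
have [e' inc_v'] := connected_incident_edge v' G'_connected G'_has_edge.
rewrite (d_degree e') -(sum_fiber_harmonic inc_v') big_distrl /=.
by apply: eq_bigr => v /eqP ->.
Qed.

Lemma sum_harmonic : \sum_v M v = d * #|vert G'|.
Proof.
rewrite -sum1_card -(sum_harmonic_comp (fun=> 1)).
by apply: eq_bigr => v _; rewrite muln1.
Qed.

Local Open Scope ring_scope.

Lemma genus_defect :
  2 * genus G - 2 = d%:Z * (2 * genus G' - 2)
    + \sum_v 2 * ((M v)%:Z - 1 + (weight v)%:Z - (M v)%:Z * (weight (phiV v))%:Z)
    + (2 * #|edge G|%:Z - 2 * (d * #|edge G'|)%:Z).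
Proof.
rewrite /genus -mulr_sumr !sumrB big_split /= sumrB.
under [\sum__ (M _)%:Z * _]eq_bigr do rewrite -PoszM.
rewrite -!Posz_sum sum_harmonic sum_harmonic_comp sum1_card.
by rewrite !PoszM; ring.
Qed.

Lemma sum_ramification : loopless G ->
  \sum_v \sum_(e in Ev v) ((r e)%:Z - 1) =
    2 * (d * #|edge G'|)%:Z - 2 * #|edge G|%:Z.
Proof.
move=> G_loopless.
transitivity (Posz (\sum_v \sum_(e in Ev v) r e) - Posz (\sum_(v : vert G) valence v)).
  rewrite !Posz_sum -sumrB; apply: eq_bigr => v _.
  by rewrite Posz_sum sumrB sumr_const natz.
by rewrite handshake // sum_index_degree sum_valence // !PoszM.
Qed.

Lemma sum_valence_defect : loopless G ->
  \sum_v ((valence v)%:Z - (M v)%:Z * (valence (phiV v))%:Z) =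
    2 * #|edge G|%:Z - 2 * (d * #|edge G'|)%:Z.
Proof.
move=> G_loopless; rewrite sumrB; under [\sum__ (M _)%:Z * _]eq_bigr do rewrite -PoszM.
by rewrite -!Posz_sum sum_harmonic_comp !sum_valence // !PoszM mulrCA.
Qed.

End PseudoHarmonic.

Theorem theorem4p8 (G G' : wgraph) (phiV : vert G -> vert G')
    (phiE : edge G -> vert G' + edge G') (r : edge G -> nat)
    (M : vert G -> nat) (d : nat) :
  connected_graph G -> loopless G ->
  connected_graph G' -> loopless G' ->
  (0 < #|edge G'|)%N ->
  is_morphism phiV phiE -> is_indexing phiE r ->
  pseudo_harmonic_with phiV phiE r M -> is_degree phiE r d ->
  let S := (\sum_(v : vert G)
              2 * ((M v)%:Z - 1 + (weight v)%:Z - (M v)%:Z * (weight (phiV v))%:Z))%R in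
  ((2 * genus G - 2 = d%:Z * (2 * genus G' - 2) + S
       - \sum_(v : vert G) \sum_(e in Ev v) ((r e)%:Z - 1))%R /\
   (2 * genus G - 2 = d%:Z * (2 * genus G' - 2) + S
       + \sum_(v : vert G) ((valence v)%:Z - (M v)%:Z * (valence (phiV v))%:Z))%R).
Proof.
move=> _ *; rewrite (@genus_defect G G' phiV phiE r M d) //.
split; congr (_ + _)%R; first by rewrite (@sum_ramification G G' phiE r d) // opprB.
by rewrite (@sum_valence_defect G G' phiV phiE r M d).
Qed.
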